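(* Let $N\ge 1$ be an integer and let $q$ satisfy one of the following: (i) $q$ is real with $q>0$; or (ii) $q=e^{i\pi\varphi}$ with $0<\varphi<\frac{1}{2N}$. Let $\pi_N:U_q(su(2))\to \mathrm{End}(V_N)$ be the $(N+1)$-dimensional irreducible representation, equipped with the Hilbert space structure making it a unitary ($*$-)representation for the star structure $H^*=H$, $(X^\pm)^*=X^\mp$. Let $\mathcal{S}^2_{q,N}:=\mathrm{End}(V_N)$, with involution $f\mapsto f^*$ the Hilbert space adjoint, and for $r>0$ define the integral $$\int f := \frac{4\pi r^2}{[N+1]_q}\,\mathrm{Tr}\big(f\,\pi_N(q^{H})\big),\qquad f\in \mathcal{S}^2_{q,N}.$$ Then for every $f\in\mathcal{S}^2_{q,N}$: in case (i), $\overline{\int f}=\int f^*$; in case (ii), $\overline{\int f}=\int f^*\,\pi_N(q^{-2H})$. (Here the bar denotes complex conjugation.)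
   Context: $U_q(su(2))$ is the algebra generated by $H,X^+,X^-$ with relations $[H,X^\pm]=\pm 2X^\pm$, $[X^+,X^-]=[H]_q:=\frac{q^H-q^{-H}}{q-q^{-1}}$; $q$-numbers are $[n]_q=\frac{q^n-q^{-n}}{q-q^{-1}}$. Its Hopf structure is $\Delta(H)=H\otimes1+1\otimes H$, $\Delta(X^\pm)=X^\pm\otimes q^{H/2}+q^{-H/2}\otimes X^\pm$, $S(H)=-H$, $S(X^\pm)=-q^{\pm1}X^\pm$, $\varepsilon(H)=\varepsilon(X^\pm)=0$. On $V_N$, $q^{H}$ acts diagonally in a weight basis, by $q^m$ on a vector of $H$-weight $m$. Under the stated assumptions on $q$, $V_N$ admits an inner product for which $\pi_N(u^* )=\pi_N(u)^\dagger$. The algebra $\mathcal{S}^2_{q,N}$ is the $q$-deformed fuzzy sphere (it is generated by the images of the $U_q(su(2))$ generators). *)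

From HB Require Import structures.
From mathcomp Require Import all_boot all_order all_algebra.
From mathcomp Require Import reals trigo.
From mathcomp Require Export complex.
Set Implicit Arguments. Unset Strict Implicit. Unset Printing Implicit Defensive.
Import Order.TTheory GRing.Theory Num.Theory.
Local Open Scope ring_scope.
Local Open Scope complex_scope.

Section Defs.
Variable R : realType.
Local Notation C := R[i].

Definition qnum (q : C) (n : int) : C :=
  if q == 1 then n%:~R else (q ^ n - q ^ (- n)) / (q - q^-1).

Variable N : nat.

(* Weight basis v_0, ..., v_N of V_N (dimension N+1); H v_k = (N - 2k) v_k. *)
Definition wt (k : 'I_N.+1) : int := (N%:Z - 2%:Z * k%:Z)%R.

(* Matrices act on column vectors: entry (i, j) is the coefficient of v_i
   in the image of v_j. *)
Definition piH : 'M[C]_N.+1 :=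
  \matrix_(i, j) (if i == j then (wt i)%:~R else 0).

(* X^+ v_k = [N-k+1]_q v_{k-1},  X^- v_k = [k+1]_q v_{k+1}. *)
Definition piXp (q : C) : 'M[C]_N.+1 :=
  \matrix_(i, j) (if val j == (val i).+1 then qnum q (N - i)%N else 0).
Definition piXm (q : C) : 'M[C]_N.+1 :=
  \matrix_(i, j) (if val i == (val j).+1 then qnum q i else 0).

Definition piqH (q : C) (a : int) : 'M[C]_N.+1 :=
  \matrix_(i, j) (if i == j then q ^ (a * wt i) else 0).

Definition ctr (A : 'M[C]_N.+1) : 'M[C]_N.+1 := (map_mx Num.conj A)^T.

(* An inner product <u, v> = u^* G v on C^(N+1) (antilinear in the first
   argument), given by its Gram matrix G in the weight basis. *)
Definition inner_product (G : 'M[C]_N.+1) : Prop :=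
  ctr G = G /\
  forall v : 'cV[C]_N.+1, v != 0 -> 0 < ((map_mx Num.conj v)^T *m G *m v) 0 0.

(* Hilbert-space adjoint of f with respect to the inner product G. *)
Definition adj (G f : 'M[C]_N.+1) : 'M[C]_N.+1 := invmx G *m ctr f *m G.

Definition star_rep (q : C) (G : 'M[C]_N.+1) : Prop :=
  adj G piH = piH /\ adj G (piXp q) = piXm q /\ adj G (piXm q) = piXp q.

Definition integral (q : C) (r : R) (f : 'M[C]_N.+1) : C :=
  ((4 * pi * r ^+ 2)%:C / qnum q (N.+1)%N) * \tr (f *m piqH q 1).

End Defs.

From HB Require Import structures.
From mathcomp Require Import all_boot all_order all_algebra.
From mathcomp Require Import reals trigo complex.
From mathcomp Require Import zify.
(* The invariant inner product [G] commutes with the self-adjoint matrix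
   [pi_N(H)], whose eigenvalues (the weights) are distinct, so [G] is diagonal
   in the weight basis and commutes with every [pi_N(q^(aH))].  Hence inside the
   trace the adjoint [adj G f] may be replaced by the conjugate transpose of [f],
   and conjugating the integral amounts to replacing [q] by its conjugate.  For
   real [q] this changes nothing; on the unit circle the conjugate is [q^-1],
   [qnum] is invariant under [q -> q^-1], and
   [pi_N(q^(-H)) = pi_N(q^(-2H)) pi_N(q^H)]. *)

Set Implicit Arguments.
Unset Strict Implicit.
Unset Printing Implicit Defensive.

Import Order.TTheory GRing.Theory Num.Theory.
Local Open Scope ring_scope.
Local Open Scope complex_scope.

Lemma diag_mx_rowE (V : nmodType) n (x : 'I_n -> V) :
  diag_mx (\row_k x k) = \matrix_(i, j) (if i == j then x i else 0).
Proof. by apply/matrixP => i j; rewrite !mxE; case: eqP. Qed.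

Lemma comm_diag_mx_is_diag (F : idomainType) n (d : 'rV[F]_n) (A : 'M[F]_n) :
  injective (d 0) -> comm_mx A (diag_mx d) -> is_diag_mx A.
Proof.
move=> d_inj AdC; apply/is_diag_mxP => i j ij_neq.
have /eqP := congr1 (fun M : 'M_n => M i j) AdC.
rewrite mul_diag_mx mul_mx_diag !mxE mulrC -subr_eq0 -mulrBl mulf_eq0 subr_eq0.
by case/orP => /eqP // /d_inj ji; rewrite ji eqxx in ij_neq.
Qed.

Lemma conj_qnum (R : realType) (q : R[i]) n : (qnum q n)^* = qnum q^* n.
Proof.
rewrite /qnum; have -> : (q^* == 1) = (q == 1).
  by rewrite -(inj_eq (can_inj (@conjcK R))) conjcK rmorph1.
case: eqP => _; first by rewrite rmorph_int.
by rewrite rmorphM !rmorphB !fmorphV rmorphB fmorphV !fmorphXz.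
Qed.

Lemma qnumV (R : realType) (q : R[i]) n : qnum q^-1 n = qnum q n.
Proof.
rewrite /qnum invr_eq1; case: eqP => // _.
by rewrite !exprz_inv opprK invrK -opprB -[q^-1 - _]opprB invrN mulrNN.
Qed.

Section StarRepresentation.
Variable R : realType.
Local Notation C := R[i].
Variable N : nat.
Implicit Types (q : C) (a : int) (A B G f : 'M[C]_N.+1).

Lemma ctr_mul A B : ctr (A *m B) = ctr B *m ctr A.
Proof. by rewrite /ctr map_mxM trmx_mul. Qed.

Lemma ctr_diag (d : 'rV[C]_N.+1) :
  ctr (diag_mx d) = diag_mx (map_mx Num.conj d).
Proof. by rewrite /ctr map_diag_mx tr_diag_mx. Qed.

Lemma mxtrace_ctr A : \tr (ctr A) = (\tr A)^*.
Proof.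
by rewrite /ctr mxtrace_tr /mxtrace rmorph_sum; apply: eq_bigr => i _; rewrite mxE.
Qed.

Lemma inner_product_unitmx G : inner_product G -> G \in unitmx.
Proof.
move=> [_ G_pos]; rewrite unitmxE unitfE -det_tr.
apply/negP => /det0P [v v_neq0 vG0].
have w_neq0 : v^T != 0 by rewrite -trmx0 (inj_eq trmx_inj).
have Gw0 : G *m v^T = 0 by rewrite -[G]trmxK -trmx_mul vG0 trmx0.
by have := G_pos _ w_neq0; rewrite -mulmxA Gw0 mulmx0 mxE ltxx.
Qed.

Lemma mxtrace_adj G f D :
  G \in unitmx -> comm_mx G D -> \tr (adj G f *m D) = \tr (ctr f *m D).
Proof.
move=> G_unit GD; rewrite /adj -!mulmxA GD mxtrace_mulC -!mulmxA.
by rewrite mulmxV // mulmx1.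
Qed.

Lemma wt_inj : injective (@wt N).
Proof. by move=> i j; rewrite /wt => ij; apply: ord_inj; lia. Qed.

Lemma piH_diag : piH R N = diag_mx (\row_k (wt k)%:~R).
Proof. by rewrite diag_mx_rowE. Qed.

Lemma piqH_diag q a : piqH N q a = diag_mx (\row_k q ^ (a * wt k)).
Proof. by rewrite diag_mx_rowE. Qed.

Lemma ctr_piH : ctr (piH R N) = piH R N.
Proof.
by rewrite piH_diag ctr_diag; congr diag_mx; apply/rowP => k; rewrite !mxE rmorph_int.
Qed.

Lemma ctr_piqH q a : ctr (piqH N q a) = piqH N q^* a.
Proof.
by rewrite !piqH_diag ctr_diag; congr diag_mx; apply/rowP => k; rewrite !mxE fmorphXz.
Qed.

Lemma piqH_mul q a b : q != 0 -> piqH N q a *m piqH N q b = piqH N q (a + b).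
Proof.
move=> q_neq0; rewrite !piqH_diag mulmx_diag; congr diag_mx.
by apply/rowP => k; rewrite !mxE -expfzDr // mulrDl.
Qed.

Lemma piqH_inv q a : piqH N q^-1 a = piqH N q (- a).
Proof.
by rewrite !piqH_diag; congr diag_mx; apply/rowP => k; rewrite !mxE exprz_inv mulNr.
Qed.

Lemma conj_integral q r f : (integral q r f)^* = integral q^* r (ctr f).
Proof.
(* [/=] computes the conjugate of the real prefactor. *)
rewrite /integral rmorphM rmorphM fmorphV /= oppr0 conj_qnum -mxtrace_ctr ctr_mul.
by rewrite ctr_piqH mxtrace_mulC.
Qed.

Lemma integralV q r f :
  q != 0 -> integral q^-1 r f = integral q r (f *m piqH N q (-2)).
Proof. by move=> q_neq0; rewrite /integral qnumV piqH_inv -mulmxA piqH_mul. Qed.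

Section InvariantInnerProduct.
Variables (q : C) (G : 'M[C]_N.+1).
Hypotheses (G_ip : inner_product G) (G_star : star_rep q G).

Lemma star_rep_is_diag : is_diag_mx G.
Proof.
have G_unit := inner_product_unitmx G_ip; have [H_sa _] := G_star.
have GH : comm_mx G (piH R N).
  move: H_sa; rewrite /adj ctr_piH => /(congr1 (mulmx G)).
  by rewrite !mulmxA mulmxV // mul1mx.
apply: (@comm_diag_mx_is_diag _ _ (\row_k (wt k)%:~R)); last by rewrite -piH_diag.
by move=> i j; rewrite !mxE => /intr_inj/wt_inj.
Qed.

Lemma integral_adj p r f : integral p r (adj G f) = integral p r (ctr f).
Proof.
rewrite /integral mxtrace_adj ?inner_product_unitmx //.
have /diag_mxP [d ->] := star_rep_is_diag.
by rewrite piqH_diag; exact: diag_mx_comm.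
Qed.

End InvariantInnerProduct.

End StarRepresentation.

Lemma mul_conj_cos_sin (R : realType) (t : R) :
  (cos t +i* sin t) * (cos t +i* sin t)^* = 1.
Proof. by rewrite -sqr_normc -add_Re2_Im2 /= cos2Dsin2. Qed.

Theorem mainTheorem1 (R : realType) (N : nat) (q : R[i]) (r : R)
    (G : 'M[R[i]]_N.+1) :
  (0 < N)%N -> 0 < r ->
  inner_product G -> star_rep q G ->
  ((exists a : R, 0 < a /\ q = a%:C) ->
     forall f : 'M[R[i]]_N.+1,
       (integral q r f)^* = integral q r (adj G f))
  /\
  ((exists phi : R, 0 < phi /\ phi < (2 * N%:R)^-1 /\
      q = cos (pi * phi) +i* sin (pi * phi)) ->
     forall f : 'M[R[i]]_N.+1,
       (integral q r f)^* = integral q r (adj G f *m piqH N q (-2))).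
Proof.
(* The bounds on [N], [r] and [phi] only ensure [qnum q N.+1 != 0]; both
   identities hold regardless, as division by [0] gives [0] on both sides. *)
move=> _ _ G_ip G_star; split.
- move=> [a [_ ->]] f.
  by rewrite conj_integral conjc_real (integral_adj G_ip G_star).
- move=> [phi [_ [_ q_def]]] f.
  have qq1 : q * q^* = 1 by rewrite q_def mul_conj_cos_sin.
  have q_neq0 : q != 0 by rewrite -unitfE; apply/unitrPr; exists q^*.
  have q_conj : q^* = q^-1 by rewrite (mulr1_eq qq1).
  rewrite conj_integral q_conj -(integralV _ _ q_neq0).
  by rewrite (integral_adj G_ip G_star).
Qed.
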